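(* Let $\Gamma=(V,E)$ be a reflexive, locally finite, $k$-separable graph. Let $X,Y$ be two $k$-fragments of $\Gamma$ such that $|X\cap Y|\ge k$ and $|X|-|X\cap Y|+k\le |Y^{\curlywedge}|$. Then $X\cap Y$ and $X\cup Y$ are $k$-fragments of $\Gamma$.
   Context: A graph is a pair $\Gamma=(V,E)$ with $E\subseteq V\times V$; reflexive means $(x,x)\in E$ for all $x$; locally finite means each $\Gamma(x)=\{y:(x,y)\in E\}$ is finite. For $A\subseteq V$: $\Gamma(A)=\bigcup_{x\in A}\Gamma(x)$, $\partial(A)=\Gamma(A)\setminus A$, $A^{\curlywedge}=V\setminus(A\cup\Gamma(A))$. $\Gamma$ is $k$-separable if some finite $X$ has $|X|\ge k$ and $|V\setminus\Gamma(X)|\ge k$; then $\kappa_k(\Gamma)=\min\{|\partial(X)|: X\text{ finite}, |X|\ge k, |V\setminus\Gamma(X)|\ge k\}$, and a $k$-fragment is a finite $X$ with $|X|\ge k$, $|V\setminus\Gamma(X)|\ge k$ and $|\partial(X)|=\kappa_k(\Gamma)$. (When $V$ is infinite, $|Y^{\curlywedge}|$ is infinite.) *)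

(* the vertex set V may be infinite, so vertex subsets are
   predicates V -> Prop and cardinalities are witnessed by duplicate-free lists. *)
From Stdlib Require Import List Arith.
Import ListNotations.

Section Graphs.
Context {V : Type}.

Definition reflexive_graph (E : V -> V -> Prop) : Prop := forall x, E x x.

Definition card_is (A : V -> Prop) (n : nat) : Prop :=
  exists l : list V, NoDup l /\ length l = n /\ (forall x, A x <-> In x l).

Definition finite_set (A : V -> Prop) : Prop := exists n, card_is A n.

Definition card_ge (A : V -> Prop) (n : nat) : Prop :=
  exists l : list V, NoDup l /\ length l = n /\ (forall x, In x l -> A x).

Definition locally_finite (E : V -> V -> Prop) : Prop :=
  forall x, finite_set (fun y => E x y).

Definition nbhd (E : V -> V -> Prop) (A : V -> Prop) : V -> Prop :=
  fun y => exists x, A x /\ E x y.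
Definition bdry (E : V -> V -> Prop) (A : V -> Prop) : V -> Prop :=
  fun y => nbhd E A y /\ ~ A y.
Definition curly (E : V -> V -> Prop) (A : V -> Prop) : V -> Prop :=
  fun y => ~ A y /\ ~ nbhd E A y.
Definition setI (A B : V -> Prop) : V -> Prop := fun x => A x /\ B x.
Definition setU (A B : V -> Prop) : V -> Prop := fun x => A x \/ B x.

Definition k_admissible (E : V -> V -> Prop) (k : nat) (X : V -> Prop) : Prop :=
  finite_set X /\ card_ge X k /\ card_ge (fun y => ~ nbhd E X y) k.

Definition k_separable (E : V -> V -> Prop) (k : nat) : Prop :=
  exists X, k_admissible E k X.

Definition k_fragment (E : V -> V -> Prop) (k : nat) (X : V -> Prop) : Prop :=
  k_admissible E k X /\
  exists c, card_is (bdry E X) c /\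
    (forall X' c', k_admissible E k X' -> card_is (bdry E X') c' -> c <= c').

End Graphs.

From Stdlib Require Import List Arith Lia ClassicalEpsilon.
Import ListNotations.

(* Two pointwise inequalities carry the proof:
   - submodularity  |∂(X∩Y)| + |∂(X∪Y)| <= |∂X| + |∂Y|;
   - |Y^⋏| + |∂Y| + |X∩Y| <= |∂(X∪Y)| + |X| + |V \ Γ(X∪Y)|  (within U).
   With κ = |∂X| = |∂Y|: X∩Y is admissible, so |∂(X∩Y)| >= κ and hence
   |∂(X∪Y)| <= κ; the second inequality and the hypothesis on |Y^⋏| then give
   |V \ Γ(X∪Y)| >= k, so X∪Y is admissible too, |∂(X∪Y)| >= κ, and both
   boundaries have size exactly κ. *)

Section Counting.
Context {V : Type}.

Definition indicator (P : Prop) : nat :=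
  if excluded_middle_informative P then 1 else 0.

Fixpoint count_in (U : list V) (P : V -> Prop) : nat :=
  match U with
  | [] => 0
  | a :: U' => indicator (P a) + count_in U' P
  end.

Definition select (U : list V) (P : V -> Prop) : list V :=
  filter (fun x => if excluded_middle_informative (P x) then true else false) U.

Lemma select_In (U : list V) (P : V -> Prop) x : In x (select U P) <-> In x U /\ P x.
Proof.
  unfold select; rewrite filter_In.
  destruct (excluded_middle_informative (P x)); intuition congruence.
Qed.

Lemma select_length (U : list V) (P : V -> Prop) : length (select U P) = count_in U P.
Proof.
  induction U as [|a U IH]; simpl; auto.
  unfold select, indicator in *; simpl.
  destruct (excluded_middle_informative (P a)); simpl; lia.
Qed.

Lemma list_sum_map_add {A : Type} (f g : A -> nat) (l : list A) :
  list_sum (map (fun a => f a + g a) l) = list_sum (map f l) + list_sum (map g l).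
Proof. induction l; simpl; lia. Qed.

Lemma count_in_sum_le (U : list V) (Ps Qs : list (V -> Prop)) :
  (forall x, list_sum (map (fun P => indicator (P x)) Ps)
             <= list_sum (map (fun Q => indicator (Q x)) Qs)) ->
  list_sum (map (count_in U) Ps) <= list_sum (map (count_in U) Qs).
Proof.
  intros H; induction U as [|a U IH].
  - clear; induction Ps; simpl in *; lia.
  - assert (Hcons : forall Rs, map (count_in (a :: U)) Rs
                          = map (fun P => indicator (P a) + count_in U P) Rs)
      by reflexivity.
    rewrite (Hcons Ps), (Hcons Qs), !list_sum_map_add. specialize (H a). lia.
Qed.

Section Universe.
Variable U : list V.
Hypothesis U_nodup : NoDup U.

Lemma count_in_card (A : V -> Prop) n :
  (forall x, A x -> In x U) -> card_is A n -> count_in U A = n.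
Proof.
  intros HA (l & Hl & <- & Hi). rewrite <- select_length.
  assert (Hsel : NoDup (select U A)) by (apply NoDup_filter; auto).
  apply Nat.le_antisymm; apply NoDup_incl_length; auto; intros x Hx.
  - apply Hi, (select_In U A x), Hx.
  - apply select_In; split; [apply HA|]; apply Hi, Hx.
Qed.

Lemma card_of_count_in (A : V -> Prop) :
  (forall x, A x -> In x U) -> card_is A (count_in U A).
Proof.
  intros HA. exists (select U A); split; [apply NoDup_filter; auto|].
  split; [apply select_length|]. intros x; rewrite select_In; firstorder.
Qed.

Lemma card_ge_of_count_in (A : V -> Prop) n : n <= count_in U A -> card_ge A n.
Proof.
  intros Hn. rewrite <- select_length in Hn.
  assert (Hd : NoDup (select U A)) by (apply NoDup_filter; auto).
  exists (firstn n (select U A)).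
  rewrite <- (firstn_skipn n (select U A)) in Hd.
  split; [eapply NoDup_app_remove_r; eauto|].
  split; [apply firstn_length_le; auto|].
  intros x Hx. apply (select_In U A x).
  rewrite <- (firstn_skipn n (select U A)); apply in_or_app; auto.
Qed.

Lemma nodup_list_le_count_in (A : V -> Prop) (l : list V) :
  NoDup l -> (forall x, In x l -> In x U /\ A x) -> length l <= count_in U A.
Proof.
  intros Hl H. rewrite <- select_length. apply NoDup_incl_length; auto.
  intros x Hx; apply select_In; auto.
Qed.

End Universe.

Definition classical_eq_dec (x y : V) : {x = y} + {x <> y} :=
  excluded_middle_informative (x = y).

Lemma finite_sets_universe (As : list (V -> Prop)) (l : list V) :
  Forall finite_set As ->
  exists U, NoDup U /\ (forall x, In x l -> In x U) /\
            Forall (fun A => forall x, A x -> In x U) As.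
Proof.
  intros Hfin.
  assert (Hcover : exists L, Forall (fun A => forall x, A x -> In x L) As).
  { induction Hfin as [|A As [n (lA & _ & _ & HA)] _ [L HL]].
    - exists []; constructor.
    - exists (lA ++ L); constructor.
      + intros x Hx; apply in_or_app; left; apply HA, Hx.
      + revert HL; apply Forall_impl; intros B HB x Hx; apply in_or_app; right; auto. }
  destruct Hcover as [L HL].
  exists (nodup classical_eq_dec (l ++ L)); split; [apply NoDup_nodup|split].
  - intros x Hx; apply nodup_In, in_or_app; left; exact Hx.
  - revert HL; apply Forall_impl; intros A HA x Hx.
    apply nodup_In, in_or_app; right; auto.
Qed.

Lemma card_ge_of_card_is (A : V -> Prop) n m : card_is A n -> m <= n -> card_ge A m.
Proof.
  intros HA Hm.
  destruct (finite_sets_universe [A] [] ltac:(repeat constructor; exists n; auto))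
    as (U & HU & _ & HcovA%Forall_inv).
  apply (card_ge_of_count_in U HU). rewrite (count_in_card U HU A n); auto.
Qed.

Lemma card_is_unique (A : V -> Prop) n m : card_is A n -> card_is A m -> n = m.
Proof.
  intros Hn Hm.
  destruct (finite_sets_universe [A] [] ltac:(repeat constructor; exists n; auto))
    as (U & HU & _ & HcovA%Forall_inv).
  rewrite <- (count_in_card U HU A n HcovA Hn); apply count_in_card; auto.
Qed.

Lemma card_ge_mono (A B : V -> Prop) n :
  (forall x, A x -> B x) -> card_ge A n -> card_ge B n.
Proof. intros H (l & ? & ? & ?); exists l; auto. Qed.

Lemma finite_subset_setU (A B C : V -> Prop) :
  finite_set A -> finite_set B -> (forall x, C x -> setU A B x) -> finite_set C.
Proof.
  intros HA HB HC.
  destruct (finite_sets_universe [A; B] [] ltac:(repeat constructor; auto))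
    as (U & HU & _ & Hcov).
  repeat rewrite Forall_cons_iff in Hcov; destruct Hcov as (HcovA & HcovB & _).
  exists (count_in U C); apply card_of_count_in; auto.
  intros x Hx; destruct (HC x Hx); auto.
Qed.

End Counting.

Ltac indicator_cases :=
  unfold indicator;
  repeat match goal with |- context [excluded_middle_informative ?P] =>
    destruct (excluded_middle_informative P) end;
  simpl; first [lia | exfalso; tauto].

Section Neighbourhoods.
Context {V : Type}.
Variable E : V -> V -> Prop.

Lemma nbhd_setI (X Y : V -> Prop) x :
  nbhd E (setI X Y) x -> nbhd E X x /\ nbhd E Y x.
Proof. intros (z & [? ?] & ?); split; exists z; auto. Qed.

Lemma nbhd_setU (X Y : V -> Prop) x :
  nbhd E (setU X Y) x <-> nbhd E X x \/ nbhd E Y x.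
Proof.
  split.
  - intros (z & [?|?] & ?); [left|right]; exists z; auto.
  - intros [(z & ? & ?)|(z & ? & ?)]; exists z; split; unfold setU; auto.
Qed.

(* ∂(X∩Y) ⊆ ∂X ∪ X, so it is finite. *)
Lemma finite_bdry_setI (X Y : V -> Prop) :
  finite_set X -> finite_set (bdry E X) -> finite_set (bdry E (setI X Y)).
Proof.
  intros HfinX HfinB. apply (finite_subset_setU (bdry E X) X); auto.
  intros v [Hv HvI]; destruct (classic (X v)); [right; auto | left].
  split; [apply (nbhd_setI X Y v Hv) | auto].
Qed.

(* ∂(X∪Y) ⊆ ∂X ∪ ∂Y, so it is finite. *)
Lemma finite_bdry_setU (X Y : V -> Prop) :
  finite_set (bdry E X) -> finite_set (bdry E Y) -> finite_set (bdry E (setU X Y)).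
Proof.
  intros HfinX HfinY. apply (finite_subset_setU (bdry E X) (bdry E Y)); auto.
  intros v [[Hv|Hv]%nbhd_setU HvU]; [left|right]; split; auto; intro; apply HvU;
    [left|right]; auto.
Qed.

Lemma bdry_submodular (X Y : V -> Prop) a b c d :
  card_is (bdry E X) a -> card_is (bdry E Y) b ->
  card_is (bdry E (setI X Y)) c -> card_is (bdry E (setU X Y)) d ->
  c + d <= a + b.
Proof.
  intros Ha Hb Hc Hd.
  destruct (finite_sets_universe [bdry E X; bdry E Y; bdry E (setI X Y); bdry E (setU X Y)] []
              ltac:(repeat constructor; eexists; eauto))
    as (U & HU & _ & Hcov).
  repeat rewrite Forall_cons_iff in Hcov.
  destruct Hcov as (HcX & HcY & HcI & HcU & _).
  rewrite <- (count_in_card U HU _ a HcX Ha), <- (count_in_card U HU _ b HcY Hb),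
    <- (count_in_card U HU _ c HcI Hc), <- (count_in_card U HU _ d HcU Hd).
  pose proof (count_in_sum_le U [bdry E (setI X Y); bdry E (setU X Y)]
                [bdry E X; bdry E Y]) as Hsum.
  simpl in Hsum; rewrite !Nat.add_0_r in Hsum; apply Hsum; intros x.
  pose proof (nbhd_setI X Y x); pose proof (nbhd_setU X Y x).
  unfold bdry, setI, setU in *; indicator_cases.
Qed.

(* Pointwise, Y^⋏ ⊔ ∂Y ⊔ (X∩Y) is covered by ∂(X∪Y), X and V \ Γ(X∪Y);
   counted, a large Y^⋏ forces a large exterior of X∪Y. *)
Lemma exterior_setU_large (X Y : V -> Prop) nX nXY b d m r :
  card_is X nX -> card_is (setI X Y) nXY -> card_is (bdry E Y) b ->
  card_is (bdry E (setU X Y)) d -> card_ge (curly E Y) m ->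
  d + nX + r <= m + b + nXY ->
  card_ge (fun v => ~ nbhd E (setU X Y) v) r.
Proof.
  intros HnX HnXY Hb Hd (lc & Hlc & <- & Hlci) Hr.
  destruct (finite_sets_universe [X; bdry E Y; bdry E (setU X Y)] lc
              ltac:(repeat constructor; eexists; eauto))
    as (U & HU & HlcU & Hcov).
  repeat rewrite Forall_cons_iff in Hcov.
  destruct Hcov as (HcX & HcY & HcU & _).
  apply (card_ge_of_count_in U HU).
  assert (Hm : length lc <= count_in U (curly E Y))
    by (apply nodup_list_le_count_in; auto).
  assert (HcI : forall x, setI X Y x -> In x U) by (intros x [? ?]; auto).
  rewrite <- (count_in_card U HU _ nX HcX HnX), <- (count_in_card U HU _ nXY HcI HnXY),
    <- (count_in_card U HU _ b HcY Hb), <- (count_in_card U HU _ d HcU Hd) in Hr.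
  pose proof (count_in_sum_le U [curly E Y; bdry E Y; setI X Y]
                [bdry E (setU X Y); X; fun v => ~ nbhd E (setU X Y) v]) as Hsum.
  simpl in Hsum; rewrite !Nat.add_0_r in Hsum.
  enough (count_in U (curly E Y) + count_in U (bdry E Y) + count_in U (setI X Y)
          <= count_in U (bdry E (setU X Y)) + count_in U X
             + count_in U (fun v => ~ nbhd E (setU X Y) v)) by lia.
  rewrite <- !Nat.add_assoc; apply Hsum; intros x.
  pose proof (nbhd_setU X Y x).
  unfold curly, bdry, setI, setU in *; indicator_cases.
Qed.

End Neighbourhoods.

Section Fragments.
Context {V : Type}.
Variable E : V -> V -> Prop.
Variable k : nat.

Lemma fragment_bdry_min (X Z : V -> Prop) c c' :
  k_fragment E k X -> card_is (bdry E X) c ->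
  k_admissible E k Z -> card_is (bdry E Z) c' -> c <= c'.
Proof.
  intros (_ & c0 & Hc0 & Hmin) Hc HZ Hc'.
  rewrite <- (card_is_unique _ _ _ Hc0 Hc); eauto.
Qed.

Lemma fragment_of_admissible (X Z : V -> Prop) c c' :
  k_fragment E k X -> card_is (bdry E X) c ->
  k_admissible E k Z -> card_is (bdry E Z) c' -> c' <= c -> k_fragment E k Z.
Proof.
  intros HX Hc HZ Hc' Hle. split; auto. exists c'; split; auto.
  intros Z' c'' HZ' Hc''. pose proof (fragment_bdry_min X Z' c c'' HX Hc HZ' Hc''); lia.
Qed.

(* X∩Y inherits the exterior bound of X, since Γ(X∩Y) ⊆ Γ(X). *)
Lemma admissible_setI (X Y : V -> Prop) n :
  k_admissible E k X -> card_is (setI X Y) n -> k <= n -> k_admissible E k (setI X Y).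
Proof.
  intros (_ & _ & HextX) Hn Hk. split; [exists n; auto|split].
  - apply (card_ge_of_card_is _ n); auto.
  - revert HextX; apply card_ge_mono. intros v Hv HvI; apply Hv, (nbhd_setI E X Y v HvI).
Qed.

(* X∪Y is admissible as soon as its exterior is large enough: it is finite
   and contains X. *)
Lemma admissible_setU (X Y : V -> Prop) :
  k_admissible E k X -> finite_set Y ->
  card_ge (fun v => ~ nbhd E (setU X Y) v) k -> k_admissible E k (setU X Y).
Proof.
  intros (HfinX & HgeX & _) HfinY Hext. split; [|split; auto].
  - apply (finite_subset_setU X Y); auto.
  - revert HgeX; apply card_ge_mono; unfold setU; auto.
Qed.

End Fragments.

Theorem mainTheorem3 (V : Type) (E : V -> V -> Prop) (k : nat)
  (Hrefl : reflexive_graph E) (Hlf : locally_finite E) (Hsep : k_separable E k)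
  (X Y : V -> Prop) (HX : k_fragment E k X) (HY : k_fragment E k Y)
  (nX nXY : nat) (HnX : card_is X nX) (HnXY : card_is (setI X Y) nXY)
  (Hk : k <= nXY) (Hc : card_ge (curly E Y) (nX - nXY + k)) :
  k_fragment E k (setI X Y) /\ k_fragment E k (setU X Y).
Proof.
  pose proof HX as [admX (cX & HcX & _)].
  pose proof HY as [[HfinY _] (cY & HcY & _)].
  destruct (finite_bdry_setI E X Y) as [cI HcI]; [exists nX | exists cX |]; auto.
  destruct (finite_bdry_setU E X Y) as [cU HcU]; [exists cX | exists cY |]; auto.
  assert (admI : k_admissible E k (setI X Y)) by (apply (admissible_setI E k X Y nXY); auto).
  (* With κ := cX >= cY, minimality gives κ <= |∂(X∩Y)|, so by submodularity
     |∂(X∪Y)| <= κ; this makes the exterior of X∪Y large enough. *)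
  pose proof (fragment_bdry_min E k X _ cX cI HX HcX admI HcI) as HminI.
  pose proof (fragment_bdry_min E k Y _ cY cX HY HcY admX HcX) as HcYX.
  pose proof (bdry_submodular E X Y cX cY cI cU HcX HcY HcI HcU) as Hsubmod.
  assert (admU : k_admissible E k (setU X Y)).
  { apply admissible_setU; auto.
    apply (exterior_setU_large E X Y nX nXY cY cU (nX - nXY + k)); auto; lia. }
  pose proof (fragment_bdry_min E k X _ cX cU HX HcX admU HcU) as HminU.
  split; [apply (fragment_of_admissible E k X _ cX cI) |
          apply (fragment_of_admissible E k X _ cX cU)]; auto; lia.
Qed.
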